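(* Let $(q_n),(r_n)$ be complex sequences vanishing faster than any negative power of $|n|$ as $n\to\pm\infty$ with $1-q_nr_n\neq0$ and $1+q_nr_{n+1}\ne0$ for all $n$, and let $D_n,E_n,D_\infty,E_\infty,u_n,v_n,p_n,s_n$ be as in the context. Then at $z=1$ the Jost solutions of system (Q) and of system (U) with potentials $(u,v)$ and $(p,s)$ are $$\begin{bmatrix}\bar\psi_n^{(q,r)}(1)&\psi_n^{(q,r)}(1)\end{bmatrix}=\begin{bmatrix}1&0\\ \sum_{j=n}^\infty r_j&1\end{bmatrix},$$ $$\begin{bmatrix}\bar\psi_n^{(u,v)}(1)&\psi_n^{(u,v)}(1)\end{bmatrix}=\begin{bmatrix}\frac{E_{n-1}}{E_\infty}&\frac{E_{n-1}}{D_\infty}\sum_{j=n}^\infty q_j\\ -r_n\frac{D_{n-1}}{E_\infty}&\frac{D_{n-1}}{D_\infty}\big(1-r_n\sum_{j=n}^\infty q_j\big)\end{bmatrix},$$ $$\begin{bmatrix}\bar\psi_n^{(p,s)}(1)&\psi_n^{(p,s)}(1)\end{bmatrix}=\begin{bmatrix}\frac{E_{n-1}}{E_\infty}\big(1+q_n\sum_{j=n+1}^\infty r_j\big)&q_n\frac{E_{n-1}}{D_\infty}\\ \frac{D_{n}}{E_\infty}\sum_{j=n+1}^\infty r_j&\frac{D_{n}}{D_\infty}\end{bmatrix}.$$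
   Context: System (Q): $\begin{bmatrix}\alpha_n\\ \beta_n\end{bmatrix}=\begin{bmatrix} z & (z-z^{-1})q_n\\ z r_n & z^{-1}+(z-z^{-1})q_nr_n\end{bmatrix}\begin{bmatrix}\alpha_{n+1}\\ \beta_{n+1}\end{bmatrix}$; system (U) with potentials $(a,b)$: $\begin{bmatrix}\xi_n\\ \eta_n\end{bmatrix}=\begin{bmatrix} z & z a_n\\ z^{-1}b_n & z^{-1}\end{bmatrix}\begin{bmatrix}\xi_{n+1}\\ \eta_{n+1}\end{bmatrix}$. $D_n=\prod_{j\le n}(1-q_jr_j)$, $E_n=\prod_{j\le n}(1+q_jr_{j+1})$, $D_\infty=\prod_{j\in\mathbb Z}(1-q_jr_j)$, $E_\infty=\prod_{j\in\mathbb Z}(1+q_jr_{j+1})$; $u_n=q_nE_{n-1}/D_n$, $v_n=(-r_n+r_{n+1}-q_nr_nr_{n+1})D_{n-1}/E_n$, $p_n=(q_n-q_{n+1}-q_nq_{n+1}r_{n+1})E_{n-1}/D_{n+1}$, $s_n=r_{n+1}D_n/E_n$. For $|z|=1$ the Jost solutions $\psi_n$ and $\bar\psi_n$ of each system (overbar not complex conjugation) are the unique solutions with $\psi_n=\begin{bmatrix}o(1)\\ z^n[1+o(1)]\end{bmatrix}$ and $\bar\psi_n=\begin{bmatrix}z^{-n}[1+o(1)]\\ o(1)\end{bmatrix}$ as $n\to+\infty$; $\begin{bmatrix}\bar\psi_n&\psi_n\end{bmatrix}$ is the $2\times2$ matrix with these columns. *)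

From HB Require Import structures.
From mathcomp Require Import all_boot all_order all_algebra.
From mathcomp Require Import all_classical all_reals all_analysis.
From mathcomp Require Import complex.
Set Implicit Arguments. Unset Strict Implicit. Unset Printing Implicit Defensive.
Import Order.TTheory GRing.Theory Num.Theory.
Import numFieldNormedType.Exports.
Local Open Scope ring_scope.
Local Open Scope complex_scope.
Local Open Scope classical_set_scope.

HB.instance Definition _ (R : realType) := GRing.ComAlgebra.copy R[i] R[i]^o.
HB.instance Definition _ (R : realType) := NormedModule.copy R[i] R[i]^o.

Section Defs.
Variable R : realType.
Notation C := R[i].

Definition rapid_decay (x : int -> C) : Prop :=
  forall k : nat,
    (fun n : nat => (n%:R ^+ k : C) * x (Posz n)) @ \oo --> (0 : C) /\
    (fun n : nat => (n%:R ^+ k : C) * x (- Posz n)) @ \oo --> (0 : C).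

Definition tailsum (x : int -> C) (n : int) : C :=
  lim ((fun N : nat => \sum_(0 <= k < N) x (n + Posz k)) @ \oo).

Definition Dn (q r : int -> C) (n : int) : C :=
  lim ((fun N : nat => \prod_(0 <= k < N) (1 - q (n - Posz k) * r (n - Posz k)))
        @ \oo).
Definition En (q r : int -> C) (n : int) : C :=
  lim ((fun N : nat =>
          \prod_(0 <= k < N) (1 + q (n - Posz k) * r (n - Posz k + 1))) @ \oo).
Definition Dinf (q r : int -> C) : C :=
  lim ((fun N : nat =>
          \prod_(0 <= k < (2 * N).+1) (1 - q (Posz k - Posz N) * r (Posz k - Posz N)))
        @ \oo).
Definition Einf (q r : int -> C) : C :=
  lim ((fun N : nat =>
          \prod_(0 <= k < (2 * N).+1)
             (1 + q (Posz k - Posz N) * r (Posz k - Posz N + 1))) @ \oo).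

Definition u_pot q r (n : int) : C := q n * En q r (n - 1) / Dn q r n.
Definition v_pot q r (n : int) : C :=
  (- r n + r (n + 1) - q n * r n * r (n + 1)) * Dn q r (n - 1) / En q r n.
Definition p_pot q r (n : int) : C :=
  (q n - q (n + 1) - q n * q (n + 1) * r (n + 1)) * En q r (n - 1) / Dn q r (n + 1).
Definition s_pot q r (n : int) : C := r (n + 1) * Dn q r n / En q r n.

Definition mx22 (a b c d : C) : 'M[C]_2 :=
  \matrix_(i < 2, j < 2)
    if (i : nat) == 0%N then (if (j : nat) == 0%N then a else b)
    else (if (j : nat) == 0%N then c else d).
Definition col2 (a b : C) : 'cV[C]_2 :=
  \col_(i < 2) if (i : nat) == 0%N then a else b.
Definition top (v : 'cV[C]_2) : C := v ord0 ord0.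
Definition bot (v : 'cV[C]_2) : C := v ord_max ord0.

Definition Qmat (q r : int -> C) (z : C) (n : int) : 'M[C]_2 :=
  mx22 z ((z - z^-1) * q n) (z * r n) (z^-1 + (z - z^-1) * q n * r n).
Definition Umat (a b : int -> C) (z : C) (n : int) : 'M[C]_2 :=
  mx22 z (z * a n) (z^-1 * b n) z^-1.

Definition solves (M : int -> 'M[C]_2) (psi : int -> 'cV[C]_2) : Prop :=
  forall n : int, psi n = M n *m psi (n + 1).

Definition is_jost_psi (M : int -> 'M[C]_2) (z : C) (psi : int -> 'cV[C]_2) :=
  solves M psi /\
  (fun n : nat => top (psi (Posz n))) @ \oo --> (0 : C) /\
  (fun n : nat => bot (psi (Posz n)) * z ^ (- Posz n)) @ \oo --> (1 : C).
Definition is_jost_psibar (M : int -> 'M[C]_2) (z : C) (psi : int -> 'cV[C]_2) :=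
  solves M psi /\
  (fun n : nat => top (psi (Posz n)) * z ^ (Posz n)) @ \oo --> (1 : C) /\
  (fun n : nat => bot (psi (Posz n))) @ \oo --> (0 : C).

End Defs.

From HB Require Import structures.
From mathcomp Require Import all_boot all_order all_algebra.
From mathcomp Require Import all_classical all_reals all_analysis.
From mathcomp Require Import complex.
From mathcomp Require Import ring lra zify.
Set Implicit Arguments. Unset Strict Implicit. Unset Printing Implicit Defensive.
Import Order.TTheory GRing.Theory Num.Theory.
Import numFieldNormedType.Exports.
Local Open Scope ring_scope.
Local Open Scope complex_scope.
Local Open Scope classical_set_scope.

(* At z = 1 both systems read
     x_n = x_{n+1} + a_n y_{n+1},   y_n = b_n x_{n+1} + y_{n+1},
   with (a, b) = (0, r) for (Q).  When a and b are absolutely summable near +oo, a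
   solution tending to 0 vanishes identically: once the tail of |a| + |b| is below 1/2,
   telescoping bounds sup_{m >= N} (|x_m| + |y_m|) by half of itself.  So each Jost
   solution is the only solution with its asymptotics, and it suffices to check that the
   displayed columns solve the recursion (by D_n = (1 - q_n r_n) D_{n-1},
   E_n = (1 + q_n r_{n+1}) E_{n-1} and sum_{j >= n} x_j = x_n + sum_{j >= n+1} x_j) and
   have the right limits (D_n -> D_oo and E_n -> E_oo, both nonzero; tail sums -> 0).
   Rapid decay is only used through absolute summability, which makes the infinite
   products converge to nonzero limits and the tail sums converge. *)

Section ComplexNorm.
Variable R : realType.
Local Notation C := R[i].
Local Notation normc := (@Normc.normc R).

Lemma norm_normc (x : C) : `|x| = (normc x)%:C.
Proof. by case: x. Qed.

Lemma normc_ge0 (x : C) : 0 <= normc x.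
Proof. by case: x => a b; exact: sqrtr_ge0. Qed.

Lemma normc_eq0 (x : C) : (normc x == 0) = (x == 0).
Proof. by apply/eqP/eqP => [/Normc.eq0_normc | ->] //; exact: Normc.normc0. Qed.

Lemma normcB (x y : C) : normc (x - y) = normc (y - x).
Proof. by rewrite -normcN opprB. Qed.

(* [Rcomplex R] is [R[i]] normed by the real-valued [normc]. *)
Lemma normc_sum (I : Type) (s : seq I) (P : pred I) (F : I -> C) :
  normc (\sum_(i <- s | P i) F i) <= \sum_(i <- s | P i) normc (F i).
Proof. exact: (@ler_norm_sum R (Rcomplex R) I s F P). Qed.

Lemma cvgC_normcP (u : nat -> C) (l : C) :
  u @ \oo --> l <->
  forall e : R, 0 < e -> exists N, forall n, (N <= n)%N -> normc (u n - l) < e.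
Proof.
rewrite cvgrPdistC_lt; split=> [uP e e0|uP [e e']].
  have := uP e%:C; rewrite ltcR => /(_ e0)[N _ HN].
  by exists N => n /HN; rewrite norm_normc ltcR.
rewrite ltcE /= => /andP[/eqP -> e0]; have [N HN] := uP e e0.
by exists N => // n /HN; rewrite norm_normc ltcR.
Qed.

Lemma cvgC_normc_le (u : nat -> C) (l a : C) (b : R) : u @ \oo --> l ->
  (exists N, forall n, (N <= n)%N -> normc (u n - a) <= b) -> normc (l - a) <= b.
Proof.
move=> /cvgC_normcP ul [N ub]; apply/ler_addgt0Pr => e e0.
have [M uM] := ul e e0; pose n := maxn N M.
have -> : l - a = (u n - a) - (u n - l) by ring.
apply: le_trans (le_normcD _ _) _; rewrite normcN.
by apply: lerD; [exact: ub (leq_maxl _ _) | exact/ltW/uM/leq_maxr].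
Qed.

Lemma normc_le_ReIm (x : C) : normc x <= `|complex.Re x| + `|complex.Im x|.
Proof.
case: x => a b /=; rewrite -[X in _ <= X]ger0_norm ?addr_ge0 // -sqrtr_sqr.
rewrite ler_sqrt ?sqr_ge0 //.
have := normr_ge0 a; have := normr_ge0 b.
have := real_normK (num_real a); have := real_normK (num_real b); nra.
Qed.

Lemma Re_le_normc (x : C) : `|complex.Re x| <= normc x.
Proof. by case: x => a b; rewrite -sqrtr_sqr ler_wsqrtr // lerDl sqr_ge0. Qed.

Lemma Im_le_normc (x : C) : `|complex.Im x| <= normc x.
Proof. by case: x => a b; rewrite -sqrtr_sqr ler_wsqrtr // lerDr sqr_ge0. Qed.

Lemma cauchy_cvgC (u : nat -> C) :
  (forall e : R, 0 < e -> exists N, forall n, (N <= n)%N -> normc (u n - u N) < e) ->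
  exists l : C, u @ \oo --> l.
Proof.
move=> uC.
have partC (f : C -> R) : (forall x, `|f x| <= normc x) -> {morph f : x y / x - y} ->
    (f \o u) @ \oo --> lim ((f \o u) @ \oo).
  move=> fle fB; apply/cauchy_cvgP/cauchy_exP => e e0.
  have [N uN] := uC e e0; exists (f (u N)), N => // n /= Nn.
  by rewrite /ball /= -fB (le_lt_trans (fle _)) // normcB uN.
move: (partC _ Re_le_normc (raddfB _)) (partC _ Im_le_normc (raddfB _)).
set a := lim _; set b := lim _ => /cvgrPdistC_lt aP /cvgrPdistC_lt bP.
exists (a +i* b); apply/cvgC_normcP => e e0.
have e2 : 0 < e / 2 by rewrite divr_gt0.
have [N1 _ uN1] := aP _ e2; have [N2 _ uN2] := bP _ e2.
exists (maxn N1 N2) => n; rewrite geq_max => /andP[/uN1 /= ua /uN2 /= ub].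
apply: le_lt_trans (normc_le_ReIm _) _; rewrite !raddfB /=; lra.
Qed.

End ComplexNorm.

Section CauchySeries.
Variable R : realType.
Implicit Types c d : nat -> R.

Definition cauchy_series c := forall e : R, 0 < e ->
  exists N, forall n L, (N <= n)%N -> \sum_(k < L) c (n + k)%N <= e.

Lemma cauchy_series_le c d (K : R) (N0 : nat) : cauchy_series c -> 0 <= K ->
  (forall n, (N0 <= n)%N -> d n <= K * c n) -> cauchy_series d.
Proof.
move=> cC K0 dle e e0.
have [N cN] := cC (e / (K + 1)) (divr_gt0 e0 (ltr_wpDl K0 ltr01)).
exists (maxn N N0) => n L; rewrite geq_max => /andP[Nn N0n].
apply: le_trans (_ : K * \sum_(k < L) c (n + k)%N <= _).
  by rewrite mulr_sumr; apply: ler_sum => k _; apply/dle/(leq_trans N0n)/leq_addr.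
apply: le_trans (ler_wpM2l K0 (cN n L Nn)) _.
by rewrite mulrA ler_pdivrMr; nra.
Qed.

Lemma cauchy_seriesD c d :
  cauchy_series c -> cauchy_series d -> cauchy_series (fun n => c n + d n).
Proof.
move=> cC dC e e0; have e2 : 0 < e / 2 by rewrite divr_gt0.
have [N1 cN] := cC _ e2; have [N2 dN] := dC _ e2.
exists (maxn N1 N2) => n L; rewrite geq_max => /andP[n1 n2].
have := cN n L n1; have := dN n L n2; rewrite big_split /=; lra.
Qed.

Lemma cauchy_series_term c : cauchy_series c ->
  forall e : R, 0 < e -> exists N, forall n, (N <= n)%N -> c n <= e.
Proof.
move=> cC e /cC[N cN]; exists N => n /(cN n 1%N).
by rewrite big_ord1 addn0.
Qed.

End CauchySeries.

Section Summable.
Variable R : realType.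
Local Notation C := R[i].
Local Notation normc := (@Normc.normc R).

Lemma normc_nat n : normc n%:R = n%:R.
Proof. by rewrite normcMn Normc.normc1. Qed.

Lemma cauchy_series_sqr_decay (y : nat -> C) :
  (fun n => n%:R ^+ 2 * y n) @ \oo --> (0 : C) -> cauchy_series (fun n => normc (y n)).
Proof.
move=> /cvgC_normcP/(_ (1 / 2))[|N yN]; first by rewrite divr_gt0.
pose N' := maxn N 1.
have yle n : (N' <= n)%N -> normc (y n) <= n%:R^-1 - n.+1%:R^-1.
  rewrite geq_max => /andP[/yN + n1]; rewrite subr0 !Normc.normcM normc_nat => yn.
  have n1R : (1 <= n%:R :> R) by rewrite ler1n.
  have -> : n%:R^-1 - n.+1%:R^-1 = (n%:R * (n%:R + 1))^-1 :> R.
    by rewrite -natr1; field; rewrite !gt_eqF //; lra.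
  rewrite -[_^-1]div1r ler_pdivlMr; last by apply: mulr_gt0; lra.
  have := normc_ge0 (y n); nra.
have tele n L : (N' <= n)%N ->
    \sum_(k < L) normc (y (n + k)%N) <= n%:R^-1 - (n + L)%:R^-1.
  move=> Nn; elim: L => [|L IH]; first by rewrite big_ord0 addn0 subrr.
  rewrite big_ord_recr /= addnS; apply: le_trans (lerD IH (yle _ _)) _.
    exact/(leq_trans Nn)/leq_addr.
  by rewrite addrA subrK.
move=> e e0; exists (maxn N' (Num.bound e^-1)) => n L; rewrite geq_max => /andP[Nn en].
apply: le_trans (tele n L Nn) _.
have n0 : 0 < n%:R :> R by rewrite ltr0n; move: Nn; rewrite geq_max => /andP[].
have en' : e^-1 < n%:R.
  have e0' : 0 <= e^-1 by rewrite invr_ge0 ltW.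
  by apply: lt_le_trans (archi_boundP e0') _; rewrite ler_nat.
have : n%:R^-1 <= e by rewrite -[e]invrK lef_pV2 ?posrE ?invr_gt0 // ltW.
have : 0 <= (n + L)%:R^-1 :> R by rewrite invr_ge0.
lra.
Qed.

Definition abs_summable (x : int -> C) := cauchy_series (fun n : nat => normc (x n)).

Lemma eq_abs_summable (x y : int -> C) : abs_summable x -> x =1 y -> abs_summable y.
Proof. by move=> + /funext xy; rewrite xy. Qed.

Lemma abs_summable0 : abs_summable (fun _ => 0 : C).
Proof.
move=> e e0; exists 0%N => n L _.
by rewrite big1 ?ltW // => k _; rewrite Normc.normc0.
Qed.

Lemma rapid_decay_abs_summable (x : int -> C) : rapid_decay x ->
  abs_summable x /\ abs_summable (fun j => x (- j)).
Proof. by move=> /(_ 2%N)[xp xn]; split; exact: cauchy_series_sqr_decay. Qed.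

Lemma abs_summable_cvg0 (x : int -> C) : abs_summable x ->
  (fun n : nat => x n) @ \oo --> (0 : C).
Proof.
move=> /cauchy_series_term xC; apply/cvgC_normcP => e e0.
have [|N xN] := xC (e / 2); first by rewrite divr_gt0.
by exists N => n /xN; rewrite subr0; lra.
Qed.

Lemma abs_summable_shift (x : int -> C) (n : int) : abs_summable x ->
  abs_summable (fun j => x (j + n)).
Proof.
move=> xC e /xC[N xN]; case: n => a.
  exists N => m L Nm; rewrite (eq_bigr (fun k : 'I_L => normc (x (m + a + k)%N))).
    exact/xN/(leq_trans Nm)/leq_addr.
  by move=> k _; congr (normc (x _)); lia.
exists (N + a.+1)%N => m L Nm.
rewrite (eq_bigr (fun k : 'I_L => normc (x (m - a.+1 + k)%N))); first by apply: xN; lia.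
by move=> k _; congr (normc (x _)); lia.
Qed.

Lemma abs_summableD (x y : int -> C) : abs_summable x -> abs_summable y ->
  abs_summable (fun j => x j + y j).
Proof.
move=> xC yC; apply: (@cauchy_series_le _ _ _ 1 0 (cauchy_seriesD xC yC) ler01) => n _.
by rewrite mul1r le_normcD.
Qed.

Lemma abs_summableN (x : int -> C) : abs_summable x -> abs_summable (fun j => - x j).
Proof.
move=> xC; apply: (@cauchy_series_le _ _ _ 1 0 xC ler01) => n _.
by rewrite normcN mul1r.
Qed.

Lemma abs_summableMr (x y : int -> C) (l : C) : abs_summable x ->
  (fun n : nat => y n) @ \oo --> l -> abs_summable (fun j => x j * y j).
Proof.
move=> xC /cvgC_normcP/(_ 1 ltr01)[N yN].
apply: (@cauchy_series_le _ _ _ (normc l + 1) N xC) => [|n /yN yn].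
  by rewrite addr_ge0 ?normc_ge0.
rewrite Normc.normcM mulrC ler_wpM2r ?normc_ge0 //.
have -> : y n = (y n - l) + l by rewrite subrK.
by apply: le_trans (le_normcD _ _) _; lra.
Qed.

End Summable.

Section IntSequences.
Variable R : realType.
Local Notation C := R[i].

Lemma cvg_shift_add1 (y : int -> C) (l : C) : (fun n : nat => y n) @ \oo --> l ->
  (fun n : nat => y (Posz n + 1)) @ \oo --> l.
Proof.
move=> yl; have -> : (fun n : nat => y (Posz n + 1)) = (fun n : nat => y n.+1).
  by apply/funext => n; congr y; lia.
by rewrite (cvg_shiftS (fun n : nat => y n)).
Qed.

Lemma cvg_shift_sub1 (y : int -> C) (l : C) : (fun n : nat => y n) @ \oo --> l ->
  (fun n : nat => y (Posz n - 1)) @ \oo --> l.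
Proof.
rewrite -(cvg_shiftS (fun n : nat => y (Posz n - 1))).
have -> : (fun n : nat => y (Posz n.+1 - 1)) = (fun n : nat => y n).
  by apply/funext => n; congr y; lia.
by [].
Qed.

End IntSequences.

Section PartialProducts.
Variable R : realType.
Local Notation C := R[i].
Local Notation normc := (@Normc.normc R).

Lemma prod1_le_sum (t : nat -> R) (L : nat) : (forall k, 0 <= t k) ->
  \sum_(k < L) t k <= 1 / 2 -> \prod_(k < L) (1 + t k) <= 1 + 2 * \sum_(k < L) t k.
Proof.
move=> t0; elim: L => [|L IH]; first by rewrite !big_ord0 mulr0 addr0.
rewrite !big_ord_recr /= => tL.
have P0 : 0 <= \prod_(k < L) (1 + t k) by apply: prodr_ge0 => k _; rewrite addr_ge0.
have S0 : 0 <= \sum_(k < L) t k by exact: sumr_ge0.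
have tL' : \sum_(k < L) t k <= 1 / 2 by have := t0 L; lra.
have := t0 L; have := IH tL'; nra.
Qed.

Lemma normc_prod1_sub1 (c : nat -> C) (L : nat) :
  normc (\prod_(k < L) (1 + c k) - 1) <= \prod_(k < L) (1 + normc (c k)) - 1.
Proof.
elim: L => [|L IH]; first by rewrite !big_ord0 !subrr Normc.normc0.
rewrite !big_ord_recr /=; set P := \prod_(k < L) _ in IH *; set Q := \prod_(k < L) _ in IH *.
have -> : P * (1 + c L) - 1 = (P - 1) * (1 + c L) + c L by ring.
apply: le_trans (le_normcD _ _) _; rewrite Normc.normcM.
have : normc (1 + c L) <= 1 + normc (c L).
  by apply: le_trans (le_normcD _ _) _; rewrite Normc.normc1.
have := normc_ge0 (P - 1); have := normc_ge0 (1 + c L); have := normc_ge0 (c L).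
nra.
Qed.

Lemma normc_prod_tail (g : nat -> C) (n L : nat) (e : R) : e <= 1 / 2 ->
  \sum_(k < L) normc (g (n + k)%N - 1) <= e ->
  normc (\prod_(k < n + L) g k - \prod_(k < n) g k) <= normc (\prod_(k < n) g k) * (2 * e).
Proof.
move=> e2 ge; rewrite big_split_ord /= -{2}[\prod_(k < n) g k]mulr1 -mulrBr Normc.normcM.
rewrite ler_wpM2l ?normc_ge0 //.
rewrite (eq_bigr (fun k : 'I_L => 1 + (g (n + k)%N - 1))); last first.
  by move=> k _; rewrite addrC subrK.
apply: le_trans (normc_prod1_sub1 (fun k => g (n + k)%N - 1) L) _.
have := prod1_le_sum (fun k => normc_ge0 (g (n + k)%N - 1)) (le_trans ge e2).
lra.
Qed.

Section ConvergentProduct.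
Variable g : nat -> C.
Hypothesis g_neq0 : forall k, g k != 0.
Hypothesis g_cauchy : cauchy_series (fun k => normc (g k - 1)).

Lemma cvg_prod_neq0 :
  exists2 l : C, l != 0 & (fun N => \prod_(0 <= k < N) g k) @ \oo --> l.
Proof.
pose P N := \prod_(k < N) g k.
have [|N1 gN1] := @g_cauchy (1 / 4); first by rewrite divr_gt0.
have PN1 n : (N1 <= n)%N -> normc (P n - P N1) <= normc (P N1) / 2.
  move=> /subnKC <-; apply: le_trans (normc_prod_tail _ (gN1 _ _ (leqnn _))) _; first lra.
  have := normc_ge0 (P N1); lra.
have K0 := normc_ge0 (P N1).
have PK n : (N1 <= n)%N -> normc (P n) <= 2 * normc (P N1).
  move=> /PN1 Pn; have -> : P n = (P n - P N1) + P N1 by rewrite subrK.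
  by apply: le_trans (le_normcD _ _) _; lra.
have [l Pl] : exists l : C, P @ \oo --> l.
  apply: (@cauchy_cvgC _ P) => e e0.
  pose e' := Num.min (1 / 4) (e / (4 * normc (P N1) + 1)).
  have e'4 : e' <= 1 / 4 by rewrite ge_min lexx.
  have e'0 : 0 < e' by rewrite lt_min !divr_gt0 //; lra.
  have e'e : e' * (4 * normc (P N1) + 1) <= e.
    by rewrite -ler_pdivlMr ?ge_min ?lexx ?orbT //; lra.
  have [N2 gN2] := @g_cauchy e' e'0; pose N := maxn N1 N2.
  exists N => n /subnKC <-.
  apply: le_lt_trans (normc_prod_tail _ (gN2 _ _ (leq_maxr _ _))) _; first by lra.
  have := PK N (leq_maxl _ _); have := normc_ge0 (P N); nra.
exists l; last by under eq_fun do rewrite big_mkord.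
have PN1_neq0 : normc (P N1) != 0 by rewrite normc_eq0; apply/prodf_neq0 => k _.
apply: contraNneq PN1_neq0 => l0.
have := cvgC_normc_le Pl (ex_intro _ N1 PN1); rewrite l0 sub0r normcN => ?.
by apply/eqP; lra.
Qed.

End ConvergentProduct.

End PartialProducts.

Section IntProducts.
Variable R : realType.
Local Notation C := R[i].
Local Notation normc := (@Normc.normc R).

Definition prod_upto (f : int -> C) (n : int) : C :=
  lim ((fun N : nat => \prod_(0 <= k < N) f (n - Posz k)) @ \oo).
Definition prod_int (f : int -> C) : C :=
  lim ((fun N : nat => \prod_(0 <= k < (2 * N).+1) f (Posz k - Posz N)) @ \oo).

Definition admissible_factors (f : int -> C) : Prop :=
  [/\ forall j, f j != 0, abs_summable (fun j => f j - 1)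
    & abs_summable (fun j => f (- j) - 1)].

Variable f : int -> C.
Hypothesis f_admissible : admissible_factors f.

Let f_neq0 j : f j != 0. Proof. by case: f_admissible. Qed.
Let f_summable : abs_summable (fun j => f j - 1). Proof. by case: f_admissible. Qed.
Let f_summableN : abs_summable (fun j => f (- j) - 1). Proof. by case: f_admissible. Qed.

Let prod_upto_partials n :
  exists2 l, l != 0 & (fun N : nat => \prod_(0 <= k < N) f (n - Posz k)) @ \oo --> l.
Proof.
apply: cvg_prod_neq0 => [k|]; first exact: f_neq0.
suff : abs_summable (fun j => f (n - j) - 1) by [].
have -> : (fun j => f (n - j) - 1) = (fun j => (fun i => f (- i) - 1) (j + - n)).
  by apply/funext => j /=; congr (f _ - 1); ring.
exact: (abs_summable_shift (- n) f_summableN).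
Qed.

Lemma prod_upto_cvg n :
  (fun N : nat => \prod_(0 <= k < N) f (n - Posz k)) @ \oo --> prod_upto f n.
Proof.
have [l _ fl] := prod_upto_partials n.
by rewrite /prod_upto (cvg_lim (@norm_hausdorff _ _) fl).
Qed.

Lemma prod_upto_neq0 n : prod_upto f n != 0.
Proof.
have [l l0 fl] := prod_upto_partials n.
by rewrite /prod_upto (cvg_lim (@norm_hausdorff _ _) fl).
Qed.

Lemma prod_upto_rec n : prod_upto f n = f n * prod_upto f (n - 1).
Proof.
have := @prod_upto_cvg n; rewrite -cvg_shiftS => /(cvg_lim (@norm_hausdorff _ _)) <-.
apply: (cvg_lim (@norm_hausdorff _ _)).
have -> : (fun N : nat => \prod_(0 <= k < N.+1) f (n - Posz k)) =
          (fun N => f n * \prod_(0 <= k < N) f (n - 1 - Posz k)).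
  apply/funext => N; rewrite big_nat_recl // subr0; congr (_ * _).
  by apply: eq_bigr => k _; congr f; lia.
by apply: cvgM; [exact: cvg_cst | exact: prod_upto_cvg].
Qed.

Lemma prod_upto_nat (m : nat) :
  prod_upto f m = prod_upto f 0 * \prod_(0 <= k < m) f (Posz k + 1).
Proof.
elim: m => [|m IH]; first by rewrite big_geq // mulr1.
rewrite prod_upto_rec big_nat_recr //= mulrA -IH mulrC.
by congr (_ * f _ ); [congr prod_upto|]; lia.
Qed.

Lemma prod_sym_split (N : nat) :
  \prod_(0 <= k < (2 * N).+1) f (Posz k - Posz N) =
  \prod_(0 <= k < N.+1) f (0 - Posz k) * \prod_(0 <= k < N) f (Posz k + 1).
Proof.
rewrite (@big_cat_nat _ _ _ N.+1) //=; last by rewrite ltnS; lia.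
congr (_ * _).
  by rewrite big_nat_rev; apply: eq_big_nat => k /andP[_ kN]; congr f; lia.
rewrite -{1}[N.+1]add0n big_addn.
have -> : ((2 * N).+1 - N.+1 = N)%N by lia.
by apply: eq_bigr => k _; congr f; lia.
Qed.

Let prod_int_factor : exists2 Q, Q != 0 &
  prod_int f = prod_upto f 0 * Q /\
  (fun m : nat => prod_upto f m) @ \oo --> prod_upto f 0 * Q.
Proof.
have [|Q Q0 fQ] := @cvg_prod_neq0 _ (fun k => f (Posz k + 1)) (fun k => f_neq0 _).
  exact: (abs_summable_shift 1 f_summable).
have P0 : (fun N : nat => \prod_(0 <= k < N.+1) f (0 - Posz k)) @ \oo --> prod_upto f 0.
  rewrite (cvg_shiftS (fun N : nat => \prod_(0 <= k < N) f (0 - Posz k))).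
  exact: prod_upto_cvg.
exists Q; [exact: Q0 | split].
  rewrite /prod_int; apply: (cvg_lim (@norm_hausdorff _ _)).
  have -> : (fun N : nat => \prod_(0 <= k < (2 * N).+1) f (Posz k - Posz N)) =
            (fun N : nat => \prod_(0 <= k < N.+1) f (0 - Posz k) *
                            \prod_(0 <= k < N) f (Posz k + 1)).
    by apply/funext => N; exact: prod_sym_split.
  exact: (cvgM P0 fQ).
have -> : (fun m : nat => prod_upto f m) =
          (fun m : nat => prod_upto f 0 * \prod_(0 <= k < m) f (Posz k + 1)).
  by apply/funext => m; exact: prod_upto_nat.
exact: (cvgM (cvg_cst _) fQ).
Qed.

Lemma prod_int_neq0 : prod_int f != 0.
Proof. by have [Q Q0 [-> _]] := prod_int_factor; rewrite mulf_neq0 // prod_upto_neq0. Qed.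

Lemma prod_upto_cvg_int : (fun m : nat => prod_upto f m) @ \oo --> prod_int f.
Proof. by have [Q _ [-> fQ]] := prod_int_factor; exact: fQ. Qed.

End IntProducts.

Section TailSums.
Variable R : realType.
Local Notation C := R[i].
Local Notation normc := (@Normc.normc R).
Variable x : int -> C.
Hypothesis x_summable : abs_summable x.

Lemma tailsum_cvg n :
  (fun N : nat => \sum_(0 <= k < N) x (n + Posz k)) @ \oo --> tailsum x n.
Proof.
have [|l xl] := @cauchy_cvgC _ (fun N : nat => \sum_(0 <= k < N) x (n + Posz k)).
  move=> e e0; have /(_ (e / 2))[|N xN] := abs_summable_shift n x_summable.
    by rewrite divr_gt0.
  exists N => m /subnKC <-; set L := (m - N)%N.
  rewrite (big_cat_nat _ (leq_addr L N)) //= addrAC subrr add0r.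
  rewrite -{1}[N]add0n big_addn addKn big_mkord.
  apply: le_lt_trans (normc_sum _ _ _) _.
  apply: le_lt_trans (_ : _ <= e / 2) _; last by rewrite ltr_pdivrMr //; lra.
  by apply: le_trans (xN N L (leqnn N)); apply: ler_sum => k _; rewrite addnC addrC.
by rewrite /tailsum (cvg_lim (@norm_hausdorff _ _) xl).
Qed.

Lemma tailsum_rec n : tailsum x n = x n + tailsum x (n + 1).
Proof.
have := @tailsum_cvg n; rewrite -cvg_shiftS => /(cvg_lim (@norm_hausdorff _ _)) <-.
apply: (cvg_lim (@norm_hausdorff _ _)).
have -> : (fun N : nat => \sum_(0 <= k < N.+1) x (n + Posz k)) =
          (fun N : nat => x n + \sum_(0 <= k < N) x (n + 1 + Posz k)).
  apply/funext => N; rewrite big_nat_recl // addr0; congr (_ + _).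
  by apply: eq_bigr => k _; congr x; lia.
exact: (cvgD (cvg_cst _) (@tailsum_cvg (n + 1))).
Qed.

Lemma tailsum_cvg0 : (fun m : nat => tailsum x m) @ \oo --> (0 : C).
Proof.
apply/cvgC_normcP => e e0.
have /(_ (e / 2))[|N xN] := x_summable; first by rewrite divr_gt0.
exists N => m Nm; rewrite subr0.
apply: le_lt_trans (_ : _ <= e / 2) _; last by rewrite ltr_pdivrMr //; lra.
rewrite -[tailsum x m]subr0; apply: cvgC_normc_le (@tailsum_cvg m) _.
exists 0%N => L _; rewrite subr0 big_mkord; apply: le_trans (normc_sum _ _ _) _.
by apply: le_trans (xN m L Nm); apply: ler_sum => k _; rewrite PoszD.
Qed.

End TailSums.

Lemma le_halving_eq0 (R : realType) (w : nat -> R) (B : R) :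
  (forall m, 0 <= w m) -> (forall m, w m <= B) ->
  (forall c, (forall m, w m <= c) -> forall m, w m <= c / 2) -> forall m, w m = 0.
Proof.
move=> w0 wB halve.
have wBj j m : w m <= B / 2 ^+ j.
  elim: j m => [|j IH] m; first by rewrite expr0 divr1.
  by rewrite exprS invfM mulrA mulrAC; apply: halve.
move=> m; apply/eqP; rewrite eq_le w0 andbT leNgt; apply/negP => wm0.
have B0 : 0 <= B / w m by rewrite divr_ge0 ?(le_trans (w0 m)).
pose j := Num.bound (B / w m).
have Bj : B / w m < 2 ^+ j.
  apply: lt_le_trans (archi_boundP B0) _.
  by rewrite -natrX ler_nat ltnW // ltn_expl.
move: Bj (wBj j m); rewrite ltr_pdivrMr // ler_pdivlMr ?exprn_gt0 // mulrC; lra.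
Qed.

Section DecayingSolutions.
Variable R : realType.
Local Notation C := R[i].
Local Notation normc := (@Normc.normc R).
Variables a b t s : int -> C.
Hypothesis a_summable : abs_summable a.
Hypothesis b_summable : abs_summable b.
Hypothesis t_rec : forall n, t n = t (n + 1) + a n * s (n + 1).
Hypothesis s_rec : forall n, s n = b n * t (n + 1) + s (n + 1).
Hypothesis t_cvg0 : (fun n : nat => t n) @ \oo --> (0 : C).
Hypothesis s_cvg0 : (fun n : nat => s n) @ \oo --> (0 : C).

Let w (m : nat) := normc (t m) + normc (s m).

Let w_ge0 m : 0 <= w m.
Proof. by rewrite addr_ge0 ?normc_ge0. Qed.

Let w_small e : 0 < e -> exists M, forall m, (M <= m)%N -> w m <= e.
Proof.
move=> e0; have e2 : 0 < e / 2 by rewrite divr_gt0.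
move/cvgC_normcP: (t_cvg0) => /(_ _ e2)[M1 tM].
move/cvgC_normcP: (s_cvg0) => /(_ _ e2)[M2 sM].
exists (maxn M1 M2) => m; rewrite geq_max => /andP[/tM + /sM].
rewrite /w !subr0; lra.
Qed.

Let w_step (m : nat) :
  w m <= w m.+1 + (normc (a m) * normc (s m.+1) + normc (b m) * normc (t m.+1)).
Proof.
have m1 : Posz m + 1 = Posz m.+1 by rewrite -addn1 PoszD.
rewrite /w (t_rec m) (s_rec m) m1.
apply: le_trans (lerD (le_normcD _ _) (le_normcD _ _)) _; rewrite !Normc.normcM; lra.
Qed.

Let w_telescope (m L : nat) :
  w m <= w (m + L)%N + \sum_(k < L) (normc (a (m + k)%N) * normc (s (m + k).+1)
                                    + normc (b (m + k)%N) * normc (t (m + k).+1)).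
Proof.
elim: L => [|L IH]; first by rewrite addn0 big_ord0 addr0.
rewrite big_ord_recr /= addnS; have := w_step (m + L); lra.
Qed.

Let w_halving (N : nat) :
  (forall n L, (N <= n)%N ->
     \sum_(k < L) (normc (a (n + k)%N) + normc (b (n + k)%N)) <= 1 / 2) ->
  forall c, (forall m, w (N + m)%N <= c) -> forall m, w (N + m)%N <= c / 2.
Proof.
move=> abN c wc m; have c0 : 0 <= c := le_trans (w_ge0 _) (wc 0%N).
apply/ler_addgt0Pr => e e0; have [M wM] := w_small e0.
apply: le_trans (w_telescope _ M) _; rewrite addrC; apply: lerD; last first.
  by apply: wM; rewrite leq_addl.
pose ab k := normc (a (N + m + k)%N) + normc (b (N + m + k)%N).
apply: le_trans (_ : _ <= c * \sum_(k < M) ab k) _.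
  rewrite mulr_sumr; apply: ler_sum => k _; rewrite /ab.
  have := wc (m + k).+1; rewrite addnS addnA /w => wk.
  have := normc_ge0 (a (N + m + k)%N); have := normc_ge0 (b (N + m + k)%N).
  have := normc_ge0 (s (N + m + k).+1); have := normc_ge0 (t (N + m + k).+1); nra.
by apply: le_trans (ler_wpM2l c0 (abN _ M (leq_addr _ _))) _; rewrite mul1r.
Qed.

Lemma decaying_solution_eq0 n : t n = 0 /\ s n = 0.
Proof.
have /(_ (1 / 2))[|N1 abN1] := cauchy_seriesD a_summable b_summable.
  by rewrite divr_gt0.
have [N2 wN2] := w_small ltr01; pose N := maxn N1 N2.
have ts0 m : t (N + m)%N = 0 /\ s (N + m)%N = 0.
  have : w (N + m)%N = 0.
    apply: (@le_halving_eq0 _ (fun m => w (N + m)%N) 1) => [k|k|]; first exact: w_ge0.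
      exact/wN2/(leq_trans (leq_maxr _ _))/leq_addr.
    by apply: w_halving => k L Nk; apply: abN1; exact: leq_trans (leq_maxl _ _) Nk.
  rewrite /w => w0; have := normc_ge0 (t (N + m)%N); have := normc_ge0 (s (N + m)%N).
  by move=> ? ?; split; apply/eqP; rewrite -normc_eq0; apply/eqP; lra.
have ts0' k : t (Posz N - Posz k) = 0 /\ s (Posz N - Posz k) = 0.
  elim: k => [|k [tk sk]]; first by rewrite subr0 -[N]addn0; exact: ts0.
  have e : Posz N - Posz k = Posz N - Posz k.+1 + 1 by lia.
  rewrite e in tk sk; rewrite (t_rec (Posz N - Posz k.+1)) (s_rec (Posz N - Posz k.+1)).
  by rewrite tk sk !mulr0 !addr0.
case: n => m; last by have -> : Negz m = Posz N - Posz (N + m.+1) by lia.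
have [Nm|mN] := leqP N m; last by have -> : Posz m = Posz N - Posz (N - m) by lia.
by rewrite -(subnKC Nm).
Qed.

End DecayingSolutions.

Section JostAtOne.
Variable R : realType.
Local Notation C := R[i].

Lemma top_col2 (x y : C) : top (col2 x y) = x.
Proof. by rewrite /top /col2 mxE. Qed.

Lemma bot_col2 (x y : C) : bot (col2 x y) = y.
Proof. by rewrite /bot /col2 mxE. Qed.

Lemma col2_topbot (v : 'cV[C]_2) : v = col2 (top v) (bot v).
Proof.
apply/matrixP => i j; rewrite [j]ord1 mxE /top /bot.
by case: i => [[|[|i]] Hi] //=; congr (v _ _); apply: val_inj.
Qed.

Lemma mx22_mul_col2 (a b c d x y : C) :
  mx22 a b c d *m col2 x y = col2 (a * x + b * y) (c * x + d * y).
Proof.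
apply/matrixP => i j; rewrite [j]ord1 !mxE !big_ord_recl big_ord0 addr0 !mxE /=.
by case: i => [[|[|i]] Hi].
Qed.

Lemma solves_Umat1P (a b : int -> C) (psi : int -> 'cV[C]_2) :
  solves (Umat a b 1) psi <->
  forall n, top (psi n) = top (psi (n + 1)) + a n * bot (psi (n + 1)) /\
            bot (psi n) = b n * top (psi (n + 1)) + bot (psi (n + 1)).
Proof.
have U1 n v : Umat a b 1 n *m v = col2 (top v + a n * bot v) (b n * top v + bot v).
  by rewrite {1}(col2_topbot v) mx22_mul_col2 invr1 !mul1r.
split=> [psiS n | psiR n]; first by rewrite (psiS n) U1 top_col2 bot_col2.
by rewrite U1 (col2_topbot (psi n)); case: (psiR n) => <- <-.
Qed.

Lemma Qmat1E (q r : int -> C) : Qmat q r 1 = Umat (fun _ => 0) r 1.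
Proof. by apply/funext => n; rewrite /Qmat /Umat invr1 subrr !mul0r !mul1r addr0. Qed.

Section Uniqueness.
Variables a b x y : int -> C.
Hypothesis a_summable : abs_summable a.
Hypothesis b_summable : abs_summable b.
Hypothesis x_rec : forall n, x n = x (n + 1) + a n * y (n + 1).
Hypothesis y_rec : forall n, y n = b n * x (n + 1) + y (n + 1).

Lemma Umat1_solution_unique (x0 y0 : C) :
  (fun n : nat => x n) @ \oo --> x0 -> (fun n : nat => y n) @ \oo --> y0 ->
  forall psi : int -> 'cV[C]_2,
  solves (Umat a b 1) psi /\ (fun n : nat => top (psi n)) @ \oo --> x0 /\
    (fun n : nat => bot (psi n)) @ \oo --> y0 <->
  (forall n, psi n = col2 (x n) (y n)).
Proof.
move=> xl yl psi; split=> [[/solves_Umat1P psiR [tl bl]] n | psiE].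
  have [] := @decaying_solution_eq0 _ a b (fun n => top (psi n) - x n)
    (fun n => bot (psi n) - y n) a_summable b_summable _ _ _ _ n.
  - by move=> m /=; case: (psiR m) => -> _; rewrite (x_rec m); ring.
  - by move=> m /=; case: (psiR m) => _ ->; rewrite (y_rec m); ring.
  - by rewrite -(subrr x0); exact: cvgB tl xl.
  - by rewrite -(subrr y0); exact: cvgB bl yl.
  move=> /eqP; rewrite subr_eq0 => /eqP tx /eqP; rewrite subr_eq0 => /eqP ty.
  by rewrite (col2_topbot (psi n)) tx ty.
split; [|split].
- by apply/solves_Umat1P => n; rewrite !psiE !top_col2 !bot_col2.
- by under eq_fun do rewrite psiE top_col2; exact: xl.
- by under eq_fun do rewrite psiE bot_col2; exact: yl.
Qed.

Lemma is_jost_psi_Umat1 :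
  (fun n : nat => x n) @ \oo --> (0 : C) -> (fun n : nat => y n) @ \oo --> (1 : C) ->
  forall psi, is_jost_psi (Umat a b 1) 1 psi <-> (forall n, psi n = col2 (x n) (y n)).
Proof.
move=> xl yl psi; rewrite /is_jost_psi.
have -> : (fun n : nat => bot (psi n) * 1 ^ (- Posz n)) = (fun n : nat => bot (psi n)).
  by apply/funext => n; rewrite exp1rz mulr1.
exact: Umat1_solution_unique.
Qed.

Lemma is_jost_psibar_Umat1 :
  (fun n : nat => x n) @ \oo --> (1 : C) -> (fun n : nat => y n) @ \oo --> (0 : C) ->
  forall psi, is_jost_psibar (Umat a b 1) 1 psi <-> (forall n, psi n = col2 (x n) (y n)).
Proof.
move=> xl yl psi; rewrite /is_jost_psibar.
have -> : (fun n : nat => top (psi n) * 1 ^ Posz n) = (fun n : nat => top (psi n)).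
  by apply/funext => n; rewrite exp1rz mulr1.
exact: Umat1_solution_unique.
Qed.

End Uniqueness.

End JostAtOne.

Section Theorem3p7.
Variable R : realType.
Local Notation C := R[i].
Variables q r : int -> C.
Hypothesis q_decay : rapid_decay q.
Hypothesis r_decay : rapid_decay r.
Hypothesis D_neq0 : forall n, 1 - q n * r n != 0.
Hypothesis E_neq0 : forall n, 1 + q n * r (n + 1) != 0.

Let q_sum : abs_summable q := (rapid_decay_abs_summable q_decay).1.
Let qN_sum : abs_summable (fun j => q (- j)) := (rapid_decay_abs_summable q_decay).2.
Let r_sum : abs_summable r := (rapid_decay_abs_summable r_decay).1.
Let rN_sum : abs_summable (fun j => r (- j)) := (rapid_decay_abs_summable r_decay).2.
Let q_cvg0 : (fun n : nat => q n) @ \oo --> (0 : C) := abs_summable_cvg0 q_sum.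
Let r_cvg0 : (fun n : nat => r n) @ \oo --> (0 : C) := abs_summable_cvg0 r_sum.
Let r1_cvg0 : (fun n : nat => r (Posz n + 1)) @ \oo --> (0 : C) := cvg_shift_add1 r_cvg0.

Let D_factor_sum : abs_summable (fun j => (1 - q j * r j) - 1).
Proof.
apply: (eq_abs_summable (abs_summableN (abs_summableMr q_sum r_cvg0))) => j /=.
by ring.
Qed.

Let D_factor_sumN : abs_summable (fun j => (1 - q (- j) * r (- j)) - 1).
Proof.
have qr := abs_summableMr (y := fun j => r (- j)) qN_sum (abs_summable_cvg0 rN_sum).
by apply: (eq_abs_summable (abs_summableN qr)) => j /=; ring.
Qed.

Let E_factor_sum : abs_summable (fun j => (1 + q j * r (j + 1)) - 1).
Proof.
have qr := abs_summableMr (y := fun j => r (j + 1)) q_sum r1_cvg0.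
by apply: (eq_abs_summable qr) => j /=; ring.
Qed.

Let E_factor_sumN : abs_summable (fun j => (1 + q (- j) * r (- j + 1)) - 1).
Proof.
have rN1_cvg0 : (fun n : nat => r (- Posz n + 1)) @ \oo --> (0 : C).
  have := cvg_shift_sub1 (abs_summable_cvg0 rN_sum).
  by under eq_fun do rewrite opprB addrC.
have qr := abs_summableMr (y := fun j => r (- j + 1)) qN_sum rN1_cvg0.
by apply: (eq_abs_summable qr) => j /=; ring.
Qed.

Let D_factors : admissible_factors (fun j => 1 - q j * r j).
Proof. exact: And3 D_neq0 D_factor_sum D_factor_sumN. Qed.

Let E_factors : admissible_factors (fun j => 1 + q j * r (j + 1)).
Proof. exact: And3 E_neq0 E_factor_sum E_factor_sumN. Qed.

(* [Dn q r], [En q r], [Dinf q r], [Einf q r] unfold to [prod_upto] and [prod_int]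
   of these factors. *)
Lemma Dn_rec n : Dn q r n = (1 - q n * r n) * Dn q r (n - 1).
Proof. exact: (prod_upto_rec D_factors n). Qed.

Lemma En_rec n : En q r n = (1 + q n * r (n + 1)) * En q r (n - 1).
Proof. exact: (prod_upto_rec E_factors n). Qed.

Lemma Dn_neq0 n : Dn q r n != 0.
Proof. exact: (prod_upto_neq0 D_factors n). Qed.

Lemma En_neq0 n : En q r n != 0.
Proof. exact: (prod_upto_neq0 E_factors n). Qed.

Lemma Dinf_neq0 : Dinf q r != 0.
Proof. exact: (prod_int_neq0 D_factors). Qed.

Lemma Einf_neq0 : Einf q r != 0.
Proof. exact: (prod_int_neq0 E_factors). Qed.

Lemma Dn_cvg : (fun m : nat => Dn q r m) @ \oo --> Dinf q r.
Proof. exact: (prod_upto_cvg_int D_factors). Qed.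

Lemma En_cvg : (fun m : nat => En q r m) @ \oo --> Einf q r.
Proof. exact: (prod_upto_cvg_int E_factors). Qed.

Let Dn_cvg_pred : (fun m : nat => Dn q r (Posz m - 1)) @ \oo --> Dinf q r.
Proof. exact: cvg_shift_sub1 Dn_cvg. Qed.

Let En_cvg_pred : (fun m : nat => En q r (Posz m - 1)) @ \oo --> Einf q r.
Proof. exact: cvg_shift_sub1 En_cvg. Qed.

Let u_summable : abs_summable (u_pot q r).
Proof.
rewrite /u_pot; apply: (abs_summableMr (y := fun j => (Dn q r j)^-1)).
  exact: (abs_summableMr (y := fun j => En q r (j - 1)) q_sum En_cvg_pred).
exact: cvgV Dinf_neq0 Dn_cvg.
Qed.

Let q1_summable : abs_summable (fun j => q (j + 1)) := abs_summable_shift 1 q_sum.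
Let r1_summable : abs_summable (fun j => r (j + 1)) := abs_summable_shift 1 r_sum.

Let v_summable : abs_summable (v_pot q r).
Proof.
rewrite /v_pot; apply: (abs_summableMr (y := fun j => (En q r j)^-1)); last first.
  exact: cvgV Einf_neq0 En_cvg.
apply: (abs_summableMr (y := fun j => Dn q r (j - 1)) _ Dn_cvg_pred).
apply: abs_summableD (abs_summableD (abs_summableN r_sum) r1_summable) _.
apply/abs_summableN/(abs_summableMr (y := fun j => r (j + 1)) _ r1_cvg0).
exact: (abs_summableMr (y := r) q_sum r_cvg0).
Qed.

Let p_summable : abs_summable (p_pot q r).
Proof.
rewrite /p_pot; apply: (abs_summableMr (y := fun j => (Dn q r (j + 1))^-1)); last first.
  exact: cvgV Dinf_neq0 (cvg_shift_add1 Dn_cvg).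
apply: (abs_summableMr (y := fun j => En q r (j - 1)) _ En_cvg_pred).
apply: abs_summableD (abs_summableD q_sum (abs_summableN q1_summable)) _.
apply/abs_summableN/(abs_summableMr (y := fun j => r (j + 1)) _ r1_cvg0).
exact: (abs_summableMr (y := fun j => q (j + 1)) q_sum (cvg_shift_add1 q_cvg0)).
Qed.

Let s_summable : abs_summable (s_pot q r).
Proof.
rewrite /s_pot; apply: (abs_summableMr (y := fun j => (En q r j)^-1)); last first.
  exact: cvgV Einf_neq0 En_cvg.
exact: (abs_summableMr (y := Dn q r) r1_summable Dn_cvg).
Qed.

Let Tq0 := tailsum_cvg0 q_sum.
Let Tr0 := tailsum_cvg0 r_sum.

Lemma jost_Q_psibar psib : is_jost_psibar (Qmat q r 1) 1 psib <->
  (forall n, psib n = col2 1 (tailsum r n)).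
Proof.
rewrite Qmat1E; apply: is_jost_psibar_Umat1.
- exact: abs_summable0.
- exact: r_sum.
- by move=> n; rewrite mul0r addr0.
- by move=> n; rewrite mulr1 (tailsum_rec r_sum n).
- exact: cvg_cst.
- exact: Tr0.
Qed.

Lemma jost_Q_psi psi : is_jost_psi (Qmat q r 1) 1 psi <-> (forall n, psi n = col2 0 1).
Proof.
rewrite Qmat1E; apply: is_jost_psi_Umat1.
- exact: abs_summable0.
- exact: r_sum.
- by move=> n; rewrite mul0r addr0.
- by move=> n; rewrite mulr0 add0r.
- exact: cvg_cst.
- exact: cvg_cst.
Qed.

Lemma jost_uv_psibar psib : is_jost_psibar (Umat (u_pot q r) (v_pot q r) 1) 1 psib <->
  (forall n, psib n = col2 (En q r (n - 1) / Einf q r)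
                           (- r n * Dn q r (n - 1) / Einf q r)).
Proof.
apply: is_jost_psibar_Umat1.
- exact: u_summable.
- exact: v_summable.
- move=> n; rewrite /u_pot !addrK (En_rec n); field.
  by rewrite Dn_neq0 Einf_neq0.
- move=> n; rewrite /v_pot !addrK (Dn_rec n); field.
  by rewrite En_neq0 Einf_neq0.
- rewrite -(divff Einf_neq0); exact: cvgM En_cvg_pred (cvg_cst _).
- have := cvgM (cvgM (cvgN r_cvg0) Dn_cvg_pred) (cvg_cst (Einf q r)^-1).
  by rewrite oppr0 !mul0r; apply.
Qed.

Lemma jost_uv_psi psi : is_jost_psi (Umat (u_pot q r) (v_pot q r) 1) 1 psi <->
  (forall n, psi n = col2 (En q r (n - 1) / Dinf q r * tailsum q n)
                          (Dn q r (n - 1) / Dinf q r * (1 - r n * tailsum q n))).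
Proof.
apply: is_jost_psi_Umat1.
- exact: u_summable.
- exact: v_summable.
- move=> n; rewrite /u_pot !addrK (En_rec n) (tailsum_rec q_sum n); field.
  by rewrite Dn_neq0 Dinf_neq0.
- move=> n; rewrite /v_pot !addrK (Dn_rec n) (tailsum_rec q_sum n); field.
  by rewrite En_neq0 Dinf_neq0.
- have := cvgM (cvgM En_cvg_pred (cvg_cst (Dinf q r)^-1)) Tq0.
  by rewrite mulr0; apply.
- have := cvgM (cvgM Dn_cvg_pred (cvg_cst (Dinf q r)^-1))
                (cvgB (cvg_cst (1 : C)) (cvgM r_cvg0 Tq0)).
  by rewrite (divff Dinf_neq0) mul0r subr0 mulr1; apply.
Qed.

Lemma jost_ps_psibar psib : is_jost_psibar (Umat (p_pot q r) (s_pot q r) 1) 1 psib <->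
  (forall n, psib n = col2 (En q r (n - 1) / Einf q r * (1 + q n * tailsum r (n + 1)))
                           (Dn q r n / Einf q r * tailsum r (n + 1))).
Proof.
have Tr1 := cvg_shift_add1 Tr0.
apply: is_jost_psibar_Umat1.
- exact: p_summable.
- exact: s_summable.
- move=> n; rewrite /p_pot !addrK (En_rec n) (tailsum_rec r_sum (n + 1)); field.
  by rewrite Dn_neq0 Einf_neq0.
- move=> n; rewrite /s_pot (Dn_rec (n + 1)) !addrK (tailsum_rec r_sum (n + 1)); field.
  by rewrite En_neq0 Einf_neq0.
- have := cvgM (cvgM En_cvg_pred (cvg_cst (Einf q r)^-1))
                (cvgD (cvg_cst (1 : C)) (cvgM q_cvg0 Tr1)).
  by rewrite (divff Einf_neq0) mul0r addr0 mulr1; apply.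
- have := cvgM (cvgM Dn_cvg (cvg_cst (Einf q r)^-1)) Tr1.
  by rewrite mulr0; apply.
Qed.

Lemma jost_ps_psi psi : is_jost_psi (Umat (p_pot q r) (s_pot q r) 1) 1 psi <->
  (forall n, psi n = col2 (q n * En q r (n - 1) / Dinf q r) (Dn q r n / Dinf q r)).
Proof.
apply: is_jost_psi_Umat1.
- exact: p_summable.
- exact: s_summable.
- move=> n; rewrite /p_pot !addrK (En_rec n); field.
  by rewrite Dn_neq0 Dinf_neq0.
- move=> n; rewrite /s_pot (Dn_rec (n + 1)) !addrK; field.
  by rewrite En_neq0 Dinf_neq0.
- have := cvgM (cvgM q_cvg0 En_cvg_pred) (cvg_cst (Dinf q r)^-1).
  by rewrite !mul0r; apply.
- have := cvgM Dn_cvg (cvg_cst (Dinf q r)^-1).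
  by rewrite (divff Dinf_neq0); apply.
Qed.

End Theorem3p7.

Unset Implicit Arguments.

Theorem theorem3p7 (R : realType) (q r : int -> R[i])
  (hq : rapid_decay q) (hr : rapid_decay r)
  (hD : forall n : int, 1 - q n * r n != 0)
  (hE : forall n : int, 1 + q n * r (n + 1) != 0) :
  let D := Dn q r in let E := En q r in
  let Dinfty := Dinf q r in let Einfty := Einf q r in
  (* system (Q) *)
  (forall psib, is_jost_psibar (Qmat q r 1) 1 psib <->
     (forall n, psib n = col2 1 (tailsum r n))) /\
  (forall psi, is_jost_psi (Qmat q r 1) 1 psi <->
     (forall n, psi n = col2 0 1)) /\
  (* system (U) with potentials (u,v) *)
  (forall psib, is_jost_psibar (Umat (u_pot q r) (v_pot q r) 1) 1 psib <->
     (forall n, psib n = col2 (E (n - 1) / Einfty) (- r n * D (n - 1) / Einfty))) /\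
  (forall psi, is_jost_psi (Umat (u_pot q r) (v_pot q r) 1) 1 psi <->
     (forall n, psi n = col2 (E (n - 1) / Dinfty * tailsum q n)
                             (D (n - 1) / Dinfty * (1 - r n * tailsum q n)))) /\
  (* system (U) with potentials (p,s) *)
  (forall psib, is_jost_psibar (Umat (p_pot q r) (s_pot q r) 1) 1 psib <->
     (forall n, psib n = col2 (E (n - 1) / Einfty * (1 + q n * tailsum r (n + 1)))
                              (D n / Einfty * tailsum r (n + 1)))) /\
  (forall psi, is_jost_psi (Umat (p_pot q r) (s_pot q r) 1) 1 psi <->
     (forall n, psi n = col2 (q n * E (n - 1) / Dinfty) (D n / Dinfty))).
Proof.
move=> D E Dinfty Einfty.
split; first exact: jost_Q_psibar.
split; first exact: jost_Q_psi.
split; first exact: jost_uv_psibar.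
split; first exact: jost_uv_psi.
split; first exact: jost_ps_psibar.
exact: jost_ps_psi.
Qed.
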